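(* Let $(R,[\cdot_\lambda\cdot])$ be a Lie conformal superalgebra and let $\alpha,\beta:R\to R$ be two even, commuting linear maps such that $\alpha\partial=\partial\alpha$, $\beta\partial=\partial\beta$, $\alpha([a_\lambda b])=[\alpha(a)_\lambda\alpha(b)]$ and $\beta([a_\lambda b])=[\beta(a)_\lambda\beta(b)]$ for all $a,b\in R$. Define a $\mathbb{C}$-linear map $R\otimes R\to R[\lambda]$ by $[a_\lambda b]'=[\alpha(a)_\lambda\beta(b)]$. Then $(R,[\cdot_\lambda\cdot]',\alpha,\beta)$ is a BiHom-Lie conformal superalgebra.
   Context: All spaces are over $\mathbb{C}$. For a $\mathbb{C}[\partial]$-module $V$, $V[\lambda]=\mathbb{C}[\lambda]\otimes V$. In a $\mathbb{Z}_2$-graded space, $|a|$ denotes the parity of a homogeneous element; identities involving $|a|$ are required for homogeneous elements. In an expression $[x_{-\lambda-\partial}y]$ one writes $[x_\lambda y]=\sum_n\lambda^n c_n$ and replaces $\lambda$ by $-\lambda-\partial$, with $\partial$ acting on the coefficients $c_n$. A Lie conformal superalgebra is a $\mathbb{Z}_2$-graded $\mathbb{C}[\partial]$-module $R=R_0\oplus R_1$ with a $\mathbb{C}$-linear map $R\otimes R\to R[\lambda]$, $a\otimes b\mapsto[a_\lambda b]$, with $[R_{i\,\lambda}R_j]\subseteq R_{i+j}[\lambda]$, satisfying $[(\partial a)_\lambda b]=-\lambda[a_\lambda b]$, $[a_\lambda(\partial b)]=(\partial+\lambda)[a_\lambda b]$, $[a_\lambda b]=-(-1)^{|a||b|}[b_{-\partial-\lambda}a]$,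 and $[a_\lambda[b_\mu c]]=[[a_\lambda b]_{\lambda+\mu}c]+(-1)^{|a||b|}[b_\mu[a_\lambda c]]$. A BiHom-Lie conformal superalgebra $(R,[\cdot_\lambda\cdot],\alpha,\beta)$ is a $\mathbb{Z}_2$-graded $\mathbb{C}[\partial]$-module $R=R_0\oplus R_1$ with two commuting linear maps $\alpha,\beta:R\to R$ and a $\mathbb{C}$-linear map $R\otimes R\to R[\lambda]$, $a\otimes b\mapsto[a_\lambda b]$, with $[R_{i\,\lambda}R_j]\subseteq R_{i+j}[\lambda]$ ($i,j\in\mathbb{Z}_2$), such that for all homogeneous $a,b,c\in R$: (1) $\alpha\partial=\partial\alpha$, $\beta\partial=\partial\beta$; (2) $\alpha([a_\lambda b])=[\alpha(a)_\lambda\alpha(b)]$, $\beta([a_\lambda b])=[\beta(a)_\lambda\beta(b)]$; (3) $[(\partial a)_\lambda b]=-\lambda[a_\lambda b]$, $[a_\lambda(\partial b)]=(\partial+\lambda)[a_\lambda b]$; (4) $[\beta(a)_\lambda\alpha(b)]=-(-1)^{|a||b|}[\beta(b)_{-\lambda-\partial}\alpha(a)]$; (5) $[\alpha\beta(a)_\lambda[b_\mu c]]=[[\beta(a)_\lambda b]_{\lambda+\mu}\beta(c)]+(-1)^{|a||b|}[\beta(b)_\mu[\alpha(a)_\lambda c]]$. *)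

From mathcomp Require Import all_boot all_algebra.
From mathcomp Require Import complex Rstruct.
Set Implicit Arguments. Unset Strict Implicit. Unset Printing Implicit Defensive.
Import GRing.Theory.
Local Open Scope ring_scope.

Definition CC : fieldType := (Rdefinitions.R)[i].

Section ConfDefs.
Variables (K : fieldType) (V : lmodType K).

(* An element of V[lambda] = C[lambda] (x) V is represented by its list of
   coefficients p = [:: p_0; p_1; ...], meaning sum_n lambda^n p_n.
   Trailing zeros are irrelevant: all statements go through [lcoef]. *)
Definition lcoef (p : seq V) (n : nat) : V := nth 0 p n.

(* coefficient of lambda^n in  lambda * p *)
Definition lam_mul (p : seq V) (n : nat) : V :=
  if n is n'.+1 then lcoef p n' else 0.

(* coefficient of lambda^k in  p(-lambda-d) = sum_n (-lambda-d)^n p_n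
   = sum_n (-1)^n sum_k C(n,k) lambda^k d^(n-k) p_n  *)
Definition subst_opp (d : V -> V) (p : seq V) (k : nat) : V :=
  \sum_(0 <= n < size p) (((-1) ^+ n * ('C(n, k))%:R) *: iter (n - k) d (lcoef p n)).

(* sign (-1)^{|a||b|} for parities i j *)
Definition psign (i j : bool) : K := (-1) ^+ (i && j).

(* Two-variable expressions: value at (n, m) = coefficient of lambda^n mu^m. *)
(* [x_lambda [y_mu z]] *)
Definition jac_in (br : V -> V -> seq V) (x y z : V) (n m : nat) : V :=
  lcoef (br x (lcoef (br y z) m)) n.
(* [[x_lambda y]_{lambda+mu} z] = sum_k lambda^k [ (x_(k))_{lambda+mu} z ],
   where [x_lambda y] = sum_k lambda^k e_k, and
   (lambda+mu)^j = sum_i C(j,i) lambda^i mu^(j-i). *)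
Definition jac_out (br : V -> V -> seq V) (x y z : V) (n m : nat) : V :=
  \sum_(0 <= k < n.+1)
     (('C(n - k + m, m))%:R *: lcoef (br (lcoef (br x y) k) z) (n - k + m)).
(* [y_mu [x_lambda z]] *)
Definition jac_swap (br : V -> V -> seq V) (y x z : V) (n m : nat) : V :=
  lcoef (br y (lcoef (br x z) n)) m.

(* Z2-graded C[d]-module: V = G false (+) G true, both d-stable subspaces *)
Definition graded_dmodule (d : {linear V -> V}) (G : bool -> pred V) : Prop :=
  [/\ (forall i, G i 0),
      (forall i u v, G i u -> G i v -> G i (u + v)),
      (forall i (k : K) v, G i v -> G i (k *: v)),
      (forall v, exists v0 v1, [/\ G false v0, G true v1 & v = v0 + v1])
    & (forall v, G false v -> G true v -> v = 0) /\
      (forall i v, G i v -> G i (d v))].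

Definition bracket_bilinear (br : V -> V -> seq V) : Prop :=
  (forall n (k : K) a a' b,
      lcoef (br (k *: a + a') b) n = k *: lcoef (br a b) n + lcoef (br a' b) n) /\
  (forall n (k : K) a b b',
      lcoef (br a (k *: b + b')) n = k *: lcoef (br a b) n + lcoef (br a b') n).

Definition bracket_graded (G : bool -> pred V) (br : V -> V -> seq V) : Prop :=
  forall i j a b n, G i a -> G j b -> G (addb i j) (lcoef (br a b) n).

Definition is_LCSA (d : {linear V -> V}) (G : bool -> pred V)
    (br : V -> V -> seq V) : Prop :=
  [/\ graded_dmodule d G /\ bracket_bilinear br /\ bracket_graded G br,
      (forall a b n, lcoef (br (d a) b) n = - lam_mul (br a b) n),
      (forall a b n, lcoef (br a (d b)) n = d (lcoef (br a b) n) + lam_mul (br a b) n),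
      (forall i j a b n, G i a -> G j b ->
          lcoef (br a b) n = - (psign i j *: subst_opp d (br b a) n))
    &
      (forall i j k a b c n m, G i a -> G j b -> G k c ->
          jac_in br a b c n m = jac_out br a b c n m + psign i j *: jac_swap br b a c n m)].

Definition is_BiHomLCSA (d : {linear V -> V}) (G : bool -> pred V)
    (br : V -> V -> seq V) (alpha beta : {linear V -> V}) : Prop :=
  [/\ graded_dmodule d G, bracket_bilinear br, bracket_graded G br,
      (forall v, alpha (beta v) = beta (alpha v))
    & forall i j k a b c, G i a -> G j b -> G k c ->
      [/\
          alpha (d a) = d (alpha a) /\ beta (d a) = d (beta a),
          (forall n, alpha (lcoef (br a b) n) = lcoef (br (alpha a) (alpha b)) n) /\
          (forall n, beta (lcoef (br a b) n) = lcoef (br (beta a) (beta b)) n),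
          (forall n, lcoef (br (d a) b) n = - lam_mul (br a b) n) /\
          (forall n, lcoef (br a (d b)) n = d (lcoef (br a b) n) + lam_mul (br a b) n),
          (forall n, lcoef (br (beta a) (alpha b)) n
                     = - (psign i j *: subst_opp d (br (beta b) (alpha a)) n))
        &
          (forall n m, jac_in br (alpha (beta a)) b c n m
              = jac_out br (beta a) b (beta c) n m
                + psign i j *: jac_swap br (beta b) (alpha a) c n m)]].

End ConfDefs.

(* Every axiom of the twisted bracket [a_λ b]' = [α(a)_λ β(b)] is an axiom of
   the original bracket evaluated at images under α and β.  Because α and β
   are commuting, even, ∂-equivariant bracket endomorphisms, skew-symmetry of
   [β(a)_λ α(b)]' is skew-symmetry of [αβ(a)_λ αβ(b)], and the BiHom-Jacobi
   identity for (a, b, c) is the ordinary Jacobi identity for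
   (α²β(a), αβ(b), β²(c)). *)
From mathcomp Require Import all_boot all_algebra.
From mathcomp Require Import complex Rstruct.
Set Implicit Arguments. Unset Strict Implicit. Unset Printing Implicit Defensive.
Local Open Scope ring_scope.
Import GRing.Theory.

Section TwistedBracket.
Variables (K : fieldType) (V : lmodType K).
Variables (d : {linear V -> V}) (G : bool -> pred V) (br : V -> V -> seq V).
Variables (alpha beta : {linear V -> V}).

Definition twist_bracket (a b : V) : seq V := br (alpha a) (beta b).

Hypothesis alpha_betaC : forall v, alpha (beta v) = beta (alpha v).
Hypothesis alpha_even : forall i v, G i v -> G i (alpha v).
Hypothesis beta_even : forall i v, G i v -> G i (beta v).
Hypothesis alpha_br_morph :
  forall a b n, alpha (lcoef (br a b) n) = lcoef (br (alpha a) (alpha b)) n.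
Hypothesis beta_br_morph :
  forall a b n, beta (lcoef (br a b) n) = lcoef (br (beta a) (beta b)) n.

Lemma twist_bracket_bilinear :
  bracket_bilinear br -> bracket_bilinear twist_bracket.
Proof.
move=> [brDl brDr]; split=> n k a a' b; rewrite /twist_bracket linearP.
  exact: brDl.
exact: brDr.
Qed.

Lemma twist_bracket_graded :
  bracket_graded G br -> bracket_graded G twist_bracket.
Proof.
by move=> brG i j a b n Ga Gb; apply: brG; [apply: alpha_even | apply: beta_even].
Qed.

Lemma twist_bracket_morph (f : V -> V) :
    (forall v, f (alpha v) = alpha (f v)) -> (forall v, f (beta v) = beta (f v)) ->
    (forall a b n, f (lcoef (br a b) n) = lcoef (br (f a) (f b)) n) ->
  forall a b n, f (lcoef (twist_bracket a b) n)
                = lcoef (twist_bracket (f a) (f b)) n.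
Proof. by move=> falpha fbeta fbr a b n; rewrite fbr falpha fbeta. Qed.

Lemma twist_bracket_dl :
    (forall v, alpha (d v) = d (alpha v)) ->
    (forall a b n, lcoef (br (d a) b) n = - lam_mul (br a b) n) ->
  forall a b n, lcoef (twist_bracket (d a) b) n = - lam_mul (twist_bracket a b) n.
Proof. by move=> alpha_d brdl a b n; rewrite /twist_bracket alpha_d brdl. Qed.

Lemma twist_bracket_dr :
    (forall v, beta (d v) = d (beta v)) ->
    (forall a b n,
       lcoef (br a (d b)) n = d (lcoef (br a b) n) + lam_mul (br a b) n) ->
  forall a b n, lcoef (twist_bracket a (d b)) n
                = d (lcoef (twist_bracket a b) n) + lam_mul (twist_bracket a b) n.
Proof. by move=> beta_d brdr a b n; rewrite /twist_bracket beta_d brdr. Qed.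

Lemma twist_bracket_skew :
    (forall i j a b n, G i a -> G j b ->
       lcoef (br a b) n = - (psign K i j *: subst_opp d (br b a) n)) ->
  forall i j a b, G i a -> G j b -> forall n,
    lcoef (twist_bracket (beta a) (alpha b)) n
    = - (psign K i j *: subst_opp d (twist_bracket (beta b) (alpha a)) n).
Proof.
move=> brskew i j a b Ga Gb n; rewrite /twist_bracket -!alpha_betaC.
by apply: brskew; apply: alpha_even; apply: beta_even.
Qed.

Lemma jac_in_twist x y z n m :
  jac_in twist_bracket x y z n m
  = jac_in br (alpha x) (beta (alpha y)) (beta (beta z)) n m.
Proof. by rewrite /jac_in /twist_bracket beta_br_morph. Qed.

Lemma jac_swap_twist y x z n m :
  jac_swap twist_bracket y x z n m
  = jac_swap br (alpha y) (beta (alpha x)) (beta (beta z)) n m.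
Proof. by rewrite /jac_swap /twist_bracket beta_br_morph. Qed.

Lemma jac_out_twist x y z n m :
  jac_out twist_bracket x y z n m
  = jac_out br (alpha (alpha x)) (alpha (beta y)) (beta z) n m.
Proof.
by rewrite /jac_out; apply: eq_bigr => k _; rewrite /twist_bracket alpha_br_morph.
Qed.

Lemma twist_bracket_jacobi :
    (forall i j k a b c n m, G i a -> G j b -> G k c ->
       jac_in br a b c n m = jac_out br a b c n m + psign K i j *: jac_swap br b a c n m) ->
  forall i j k a b c, G i a -> G j b -> G k c -> forall n m,
    jac_in twist_bracket (alpha (beta a)) b c n m
    = jac_out twist_bracket (beta a) b (beta c) n m
      + psign K i j *: jac_swap twist_bracket (beta b) (alpha a) c n m.
Proof.
move=> brjac i j k a b c Ga Gb Gc n m.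
rewrite jac_in_twist jac_out_twist jac_swap_twist.
rewrite -[beta (alpha b)]alpha_betaC -[beta (alpha (alpha a))]alpha_betaC.
rewrite -[beta (alpha a)]alpha_betaC.
by apply: (brjac i j k); do ![apply: alpha_even | apply: beta_even].
Qed.

End TwistedBracket.

Theorem mainTheorem1 (V : lmodType CC) (d : {linear V -> V})
    (G : bool -> pred V) (br : V -> V -> seq V) (alpha beta : {linear V -> V}) :
  is_LCSA d G br ->
  (* alpha, beta even *)
  (forall i v, G i v -> G i (alpha v)) ->
  (forall i v, G i v -> G i (beta v)) ->
  (* commuting *)
  (forall v, alpha (beta v) = beta (alpha v)) ->
  (forall v, alpha (d v) = d (alpha v)) ->
  (forall v, beta (d v) = d (beta v)) ->
  (forall a b n, alpha (lcoef (br a b) n) = lcoef (br (alpha a) (alpha b)) n) ->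
  (forall a b n, beta (lcoef (br a b) n) = lcoef (br (beta a) (beta b)) n) ->
  is_BiHomLCSA d G (fun a b => br (alpha a) (beta b)) alpha beta.
Proof.
move=> [[dmodG [brbil brG]] brdl brdr brskew brjac] alpha_even beta_even
  alpha_betaC alpha_d beta_d alpha_morph beta_morph.
split=> //; first exact: twist_bracket_bilinear.
  exact: twist_bracket_graded.
move=> i j k a b c Ga Gb Gc; split.
- by split.
- split; apply: twist_bracket_morph => // v; exact: esym.
- split; [exact: twist_bracket_dl | exact: twist_bracket_dr].
- exact: (twist_bracket_skew alpha_betaC alpha_even beta_even brskew Ga Gb).
- exact: (twist_bracket_jacobi alpha_betaC alpha_even beta_even
           alpha_morph beta_morph brjac Ga Gb Gc).
Qed.
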